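(* Let $p$ be an odd prime, $m,r$ positive integers and $k\in\{0,1,\dots,mp^r\}$. Then $$k\binom{2k}{k}\binom{2(mp^r-k)}{mp^r-k}\equiv0\pmod{p^r}.$$ *)

From mathcomp Require Import all_boot.

(** By Legendre's formula, the p-adic valuation of [C(2k, k)] is the number
    of indices [i >= 1] at which doubling [k mod p^i] overflows [p^i], i.e.
    the number of carries when adding [k] to itself in base [p].  If
    [p^i] divides [k + j] but not [k], then [k mod p^i] and [j mod p^i] sum
    to [p^i], so one of them is at least [p^i / 2] and produces a carry in
    [C(2k, k)] or in [C(2j, j)].  With [n = k + j = m p^r] this happens for
    every [i] with [logn p k < i <= r], so the carries of the two central
    binomials make up what [k] lacks to be divisible by [p^r]. *)
From mathcomp Require Import all_boot.
From mathcomp Require Import zify.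

Definition double_carry q x := (2 * (x %% q)) %/ q.

Lemma divn_double k q : 0 < q -> (2 * k) %/ q = 2 * (k %/ q) + double_carry q k.
Proof. by move=> q_gt0; rewrite {1}(divn_eq k q) mulnDr mulnA divnMDl. Qed.

Lemma logn_fact_sum p n N : prime p -> n < N ->
  logn p n`! = \sum_(1 <= i < N) n %/ p ^ i.
Proof.
move=> p_pr ltnN; rewrite logn_fact // [RHS](big_cat_nat _ (n := n.+1)) //=.
rewrite [X in _ = _ + X]big1_seq ?addn0 // => i /andP[_].
rewrite mem_iota => /andP[le_ni _]; apply: divn_small.
by apply: leq_trans le_ni (ltnW (ltn_expl _ (prime_gt1 p_pr))).
Qed.

Lemma logn_central_bin p k N : prime p -> 2 * k < N ->
  logn p 'C(2 * k, k) = \sum_(1 <= i < N) double_carry (p ^ i) k.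
Proof.
move=> p_pr lt2kN.
have fact_split : (2 * k)`! = 'C(2 * k, k) * (k`! * k`!).
  have le_k2k : k <= 2 * k by lia.
  by have := bin_fact le_k2k; rewrite (_ : 2 * k - k = k) //; lia.
have lognM_fact : logn p (2 * k)`! = logn p 'C(2 * k, k) + 2 * logn p k`!.
  by rewrite fact_split !lognM ?muln_gt0 ?bin_gt0 ?fact_gt0 ?leq_pmull //; lia.
have lognD_fact : logn p (2 * k)`! = 2 * logn p k`! + \sum_(1 <= i < N) double_carry (p ^ i) k.
  rewrite !(logn_fact_sum p _ N) //; last by lia.
  rewrite big_distrr -big_split /=; apply: eq_bigr => i _.
  by rewrite divn_double // expn_gt0 prime_gt0.
lia.
Qed.

Lemma double_carry_dvdD q k j : 0 < q -> q %| k + j -> ~~ (q %| k) ->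
  0 < double_carry q k + double_carry q j.
Proof.
move=> q_gt0 dvd_kj ndvd_k.
have kq_gt0 : 0 < k %% q by rewrite lt0n -/(dvdn q k).
have lt_kq := ltn_pmod k q_gt0; have lt_jq := ltn_pmod j q_gt0.
have mod_sum : (k %% q + j %% q) %% q = 0 by rewrite modnDm; apply/eqP.
rewrite addn_gt0 !divn_gt0 //; apply/negPn/negP; rewrite negb_or -!ltnNge.
by case/andP=> lt_k lt_j; rewrite modn_small in mod_sum; lia.
Qed.

Lemma sum_double_carry_ge {p r k j} N : prime p -> 0 < k -> p ^ r %| k + j -> r < N ->
  r - logn p k <= \sum_(1 <= i < N) (double_carry (p ^ i) k + double_carry (p ^ i) j).
Proof.
move=> p_pr k_gt0 dvd_kj ltrN; set a := logn p k.
case: (leqP r a) => [le_ra | lt_ar]; first by move: le_ra; rewrite -subn_eq0 => /eqP->.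
rewrite (big_cat_nat _ (n := a.+1)) //=; last by lia.
rewrite (big_cat_nat _ (m := a.+1) (n := r.+1)) //=; last by lia.
apply: leq_trans (leq_addl _ _); apply: leq_trans (leq_addr _ _).
have -> : r - a = \sum_(a.+1 <= i < r.+1) 1 by rewrite sum_nat_const_nat muln1 subSS.
rewrite big_seq_cond [X in _ <= X]big_seq_cond; apply: leq_sum => i.
rewrite mem_index_iota andbT => /andP[lt_ai le_ir].
apply: double_carry_dvdD; first by rewrite expn_gt0 prime_gt0.
- by apply: dvdn_trans dvd_kj; rewrite dvdn_exp2l // -ltnS.
- by rewrite pfactor_dvdn // -ltnNge.
Qed.

Lemma dvdn_mul_central_bins p r k j : prime p -> p ^ r %| k + j ->
  p ^ r %| k * 'C(2 * k, k) * 'C(2 * j, j).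
Proof.
move=> p_pr dvd_kj; case: (posnP k) => [-> | k_gt0]; first by rewrite !mul0n dvdn0.
set N := r + 2 * (k + j) + 1.
have lt_rN : r < N by lia.
have := sum_double_carry_ge N p_pr k_gt0 dvd_kj lt_rN; rewrite big_split /=.
rewrite pfactor_dvdn ?muln_gt0 ?k_gt0 ?bin_gt0 ?leq_pmull //.
rewrite !lognM ?muln_gt0 ?k_gt0 ?bin_gt0 ?leq_pmull //.
by rewrite !(logn_central_bin p _ N p_pr); lia.
Qed.

Theorem lemma2p12 (p m r k : nat) :
  prime p -> odd p -> 0 < m -> 0 < r -> k <= m * p ^ r ->
  p ^ r %| k * 'C(2 * k, k) * 'C(2 * (m * p ^ r - k), m * p ^ r - k).
Proof.
move=> p_pr _ _ _ le_k_mpr; apply: dvdn_mul_central_bins => //.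
by rewrite subnKC // dvdn_mull.
Qed.
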